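(* For every positive integer $N$ there exists a positive integer $m$ such that there are at least $N$ pairwise nonequivalent graphical Hadamard matrices of order $4^m$; that is, the number of nonequivalent graphical Hadamard matrices of order $4^m$ is unbounded as $m\to\infty$.
   Context: A Hadamard matrix of order $n$ is an $n\times n$ matrix $H$ with entries $\pm1$ such that $HH^{\top}=nI$. It is graphical if it is symmetric with constant diagonal. Two Hadamard matrices are equivalent if one can be obtained from the other by permuting rows, permuting columns, and multiplying rows and columns by $-1$. *)

From mathcomp Require Import all_boot all_order all_algebra all_fingroup.
Set Implicit Arguments. Unset Strict Implicit. Unset Printing Implicit Defensive.
Import GRing.Theory Num.Theory.
Local Open Scope ring_scope.

Definition hadamard (n : nat) (H : 'M[int]_n) : Prop :=
  (forall i j, H i j = 1 \/ H i j = -1) /\ H *m H^T = (n%:R : int)%:M.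

Definition graphical (n : nat) (H : 'M[int]_n) : Prop :=
  H^T = H /\ (forall i j : 'I_n, H i i = H j j).

Definition signed_perm_mx (n : nat) (P : 'M[int]_n) : Prop :=
  exists (d : 'I_n -> bool) (s : 'S_n),
    P = diag_mx (\row_i (if d i then -1 else 1)) *m perm_mx s.

Definition hadamard_equiv (n : nat) (H K : 'M[int]_n) : Prop :=
  exists P Q : 'M[int]_n, signed_perm_mx P /\ signed_perm_mx Q /\ K = P *m H *m Q.

(* Hadamard equivalence preserves the number of ordered quadruples of rows whose entrywise
   product is constant: signs and permutations of rows and columns only multiply such a product
   by a fixed sign or permute its entries. For a Kronecker product this count is the product of
   the counts of the factors, and for the group-developed matrix ((-1)^h(x - y)) over a finite
   abelian group G it is |G| times the number of shifts (u, v, w) for which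
   h(t) + h(t+u) + h(t+v) + h(t+w) is constant in t. Two symmetric perfect binary arrays on
   Z_4^3 give graphical Hadamard matrices of order 64 with counts 64 * 832 and 64 * 4096, so the
   Kronecker product of k copies of the first and N - k of the second is a graphical Hadamard
   matrix of order 4^(3N) whose count has 13-adic valuation exactly k. *)

From HB Require Import structures.
From mathcomp Require Import all_boot all_order all_algebra all_fingroup.
From mathcomp Require Import ring.
Set Implicit Arguments. Unset Strict Implicit. Unset Printing Implicit Defensive.
Import GRing.Theory Num.Theory.
Local Open Scope ring_scope.

Definition map4 (A B : Type) (f : A -> B) (q : A * A * A * A) : B * B * B * B :=
  (f q.1.1.1, f q.1.1.2, f q.1.2, f q.2).

Lemma map4K (A B : Type) (f : A -> B) (g : B -> A) :
  cancel f g -> cancel (map4 f) (map4 g).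
Proof. by move=> fK [[[a b] c] d]; rewrite /map4 /= !fK. Qed.

Lemma map4_bij (A B : Type) (f : A -> B) : bijective f -> bijective (map4 f).
Proof. by case=> g fK gK; exists (map4 g); apply: map4K. Qed.

Section QuadCount.
Variables (I J : finType) (F : I -> J -> int).

Definition row_prod4 (q : I * I * I * I) (y : J) : int :=
  F q.1.1.1 y * F q.1.1.2 y * F q.1.2 y * F q.2 y.

Definition const_prod4 (q : I * I * I * I) : bool :=
  [forall y, forall y', row_prod4 q y == row_prod4 q y'].

Definition quad_count : nat := (\sum_q const_prod4 q)%N.

End QuadCount.

Lemma quad_count_ext (I J : finType) (F G : I -> J -> int) :
  F =2 G -> quad_count F = quad_count G.
Proof.
move=> FG; apply: eq_bigr => q _; congr nat_of_bool.
by apply: eq_forallb => y; apply: eq_forallb => y'; rewrite /row_prod4 !FG.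
Qed.

Lemma quad_count_reindex (I' J' I J : finType) (F : I -> J -> int)
    (s : I' -> I) (t : J' -> J) :
  bijective s -> bijective t -> quad_count (fun i j => F (s i) (t j)) = quad_count F.
Proof.
move=> [s' sK s'K] [t' tK t'K].
have const_map4 q : const_prod4 (fun i j => F (s i) (t j)) q = const_prod4 F (map4 s q).
  have row_map4 z : row_prod4 (fun i j => F (s i) (t j)) q z =
                    row_prod4 F (map4 s q) (t z) by [].
  apply/forallP/forallP => Hq y; apply/forallP => y'.
    by have := forallP (Hq (t' y)) (t' y'); rewrite !row_map4 !t'K.
  by have := forallP (Hq (t y)) (t y'); rewrite !row_map4.
have s'_bij : bijective s' by exists s.
rewrite /quad_count (reindex (map4 s')) /=; last exact/onW_bij/map4_bij.
by apply: eq_bigr => q _; rewrite const_map4 (map4K s'K).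
Qed.

Lemma quad_count_sign (I J : finType) (F : I -> J -> int) (d : I -> bool) (e : J -> bool) :
  quad_count (fun i j => (-1) ^+ d i * (-1) ^+ e j * F i j) = quad_count F.
Proof.
apply: eq_bigr => q _; congr nat_of_bool.
set D : int := (-1) ^+ (d q.1.1.1 (+) d q.1.1.2 (+) d q.1.2 (+) d q.2).
have row_sign y : row_prod4 (fun i j => (-1) ^+ d i * (-1) ^+ e j * F i j) q y =
                  D * row_prod4 F q y.
  have E2 : (-1) ^+ e y * (-1) ^+ e y = 1 :> int by rewrite -expr2 sqrr_sign.
  transitivity (D * ((-1) ^+ e y * (-1) ^+ e y) * ((-1) ^+ e y * (-1) ^+ e y) *
                row_prod4 F q y); last by rewrite E2 !mulr1.
  by rewrite /row_prod4 /D !signr_addb; ring.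
by apply: eq_forallb => y; apply: eq_forallb => y';
  rewrite !row_sign (inj_eq (can_inj (signrMK _))).
Qed.

Lemma row_prod4_sign (I J : finType) (F : I -> J -> int) q y :
  (forall x y, F x y ^+ 2 = 1) -> row_prod4 F q y ^+ 2 = 1.
Proof. by move=> F_sign; rewrite /row_prod4 !exprMn !F_sign !mul1r. Qed.

Lemma sign_if (b : bool) : (if b then -1 else 1) = (-1) ^+ b :> int.
Proof. by case: b. Qed.

Lemma signed_perm_mul_entry n (H : 'M[int]_n) (d e : 'I_n -> bool) (s t : 'S_n) i j :
  (diag_mx (\row_i (if d i then -1 else 1)) *m perm_mx s *m H *m
   (diag_mx (\row_i (if e i then -1 else 1)) *m perm_mx t)) i j =
  (-1) ^+ d i * (-1) ^+ e (t^-1 j)%g * H (s i) (t^-1 j)%g.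
Proof.
rewrite -(mulmxA (diag_mx _)) -row_permE mulmxA -[perm_mx t](congr1 perm_mx (invgK t)).
by rewrite -col_permE mxE mul_mx_diag mxE mul_diag_mx !mxE !sign_if mulrAC.
Qed.

Lemma quad_count_equiv n (H K : 'M[int]_n) :
  hadamard_equiv H K -> quad_count K = quad_count H.
Proof.
case=> _ [_ [[d [s ->]] [[e [t ->]] ->]]].
rewrite (quad_count_ext (signed_perm_mul_entry H d e s t)).
rewrite (quad_count_sign (fun i j => H (s i) (t^-1 j)%g) d (fun j => e (t^-1 j)%g)).
by apply: quad_count_reindex; [exists s^-1%g | exists t]; move=> x; rewrite ?permK ?permKV.
Qed.

Section Tensor.
Variables (I G : finType) (A : I -> G -> G -> int).
Local Notation T := {ffun I -> G}.

(* The Kronecker product of the matrices A i, with rows and columns indexed by T. *)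
Definition tensor_fun (x y : T) : int := \prod_i A i (x i) (y i).

Hypothesis A_sign : forall i x y, A i x y ^+ 2 = 1.

Lemma tensor_fun_sign x y : tensor_fun x y ^+ 2 = 1.
Proof. by rewrite -prodrXl big1. Qed.

Lemma tensor_fun_orth :
    (forall i x z, \sum_y A i x y * A i z y = #|G|%:R * (x == z)%:R) ->
  forall x z : T, \sum_y tensor_fun x y * tensor_fun z y = #|T|%:R * (x == z)%:R.
Proof.
move=> A_orth x z.
transitivity (\sum_(y : T) \prod_i (A i (x i) (y i) * A i (z i) (y i))).
  by apply: eq_bigr => y _; rewrite -big_split.
rewrite -(bigA_distr_bigA (fun i g => A i (x i) g * A i (z i) g)).
under eq_bigr => i _ do rewrite A_orth.
rewrite big_split /= prodr_const card_ffun natrX; congr (_ * _).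
have [<-|/eqP xz] := eqVneq x z; first by rewrite big1 // => i _; rewrite eqxx.
have [i xzi] : exists i, x i != z i.
  apply/existsP; apply: contra_notT xz => /existsPn eq_xz.
  by apply/ffunP => i; apply/eqP/negbNE/eq_xz.
by rewrite (bigD1 i) //= (negPf xzi) mul0r.
Qed.

Lemma tensor_fun_sym :
  (forall i x y, A i x y = A i y x) -> forall x y, tensor_fun x y = tensor_fun y x.
Proof. by move=> A_sym x y; apply: eq_bigr => i _; apply: A_sym. Qed.

Lemma tensor_fun_diag :
  (forall i x y, A i x x = A i y y) -> forall x y, tensor_fun x x = tensor_fun y y.
Proof. by move=> A_diag x y; apply: eq_bigr => i _; apply: A_diag. Qed.

Lemma row_prod4_tensor q y :
  row_prod4 tensor_fun q y = \prod_i row_prod4 (A i) (map4 (fun x : T => x i) q) (y i).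
Proof. by rewrite /row_prod4 -!big_split. Qed.

Lemma const_prod4_tensor q :
  const_prod4 tensor_fun q = [forall i, const_prod4 (A i) (map4 (fun x : T => x i) q)].
Proof.
apply/forallP/forallP => /= Hq; last first.
  move=> y; apply/forallP => y'; rewrite !row_prod4_tensor; apply/eqP/eq_bigr => i _.
  exact/eqP/(forallP (forallP (Hq i) (y i))).
move=> i; apply/forallP => g; apply/forallP => g'.
pose q_i := map4 (fun x : T => x i) q.
pose y_at g : T := [ffun j => if j == i then g else q.1.1.1 j].
pose R := \prod_(j | j != i) row_prod4 (A j) (map4 (fun x : T => x j) q) (q.1.1.1 j).
have row_y_at g0 : row_prod4 tensor_fun q (y_at g0) = row_prod4 (A i) q_i g0 * R.
  rewrite row_prod4_tensor (bigD1 i) //= ffunE eqxx; congr (_ * _).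
  by apply: eq_bigr => j /negPf ji; rewrite ffunE ji.
have R_neq0 : R != 0.
  have : R ^+ 2 = 1 by rewrite -prodrXl big1 // => j _; apply: row_prod4_sign.
  by apply: contra_eq_neq => ->; rewrite expr0n.
by have := forallP (Hq (y_at g)) (y_at g'); rewrite !row_y_at (inj_eq (mulIf R_neq0)).
Qed.

Lemma quad_count_tensor : quad_count tensor_fun = (\prod_i quad_count (A i))%N.
Proof.
rewrite /quad_count (bigA_distr_bigA (fun i q => (const_prod4 (A i) q : nat))) /=.
pose zip4 (q : T * T * T * T) : {ffun I -> G * G * G * G} :=
  [ffun i => map4 (fun x : T => x i) q].
pose unzip4 (f : {ffun I -> G * G * G * G}) : T * T * T * T :=
  ([ffun i => (f i).1.1.1], [ffun i => (f i).1.1.2], [ffun i => (f i).1.2], [ffun i => (f i).2]).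
have zip4_bij : bijective zip4.
  exists unzip4.
    by case=> [[[a b] c] d]; congr (_, _, _, _); apply/ffunP => i; rewrite !ffunE.
  by move=> f; apply/ffunP => i; rewrite ffunE /map4 /= !ffunE; case: (f i) => [[[a b] c] d].
rewrite (reindex zip4) /=; last exact: onW_bij.
apply: eq_bigr => q _; rewrite const_prod4_tensor.
case: (boolP [forall i, _]) => [/forallP all_i | /forallPn [i not_i]].
  by rewrite big1 // => i _; rewrite ffunE all_i.
by rewrite (bigD1 i) //= ffunE (negPf not_i).
Qed.

End Tensor.

Section FunMatrix.
Variables (T : finType) (n : nat) (e : 'I_n -> T) (F : T -> T -> int).
Hypothesis e_bij : bijective e.

Definition fun_mx : 'M[int]_n := \matrix_(i, j) F (e i) (e j).

Lemma fun_mx_hadamard :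
    (forall x y, F x y ^+ 2 = 1) ->
    (forall x z, \sum_y F x y * F z y = #|T|%:R * (x == z)%:R) ->
  hadamard fun_mx.
Proof.
move=> F_sign F_orth; split.
  move=> i j; rewrite mxE; have /eqP := F_sign (e i) (e j).
  by rewrite sqrf_eq1 => /orP[]/eqP->; [left | right].
apply/matrixP => i j; rewrite !mxE.
under eq_bigr => k _ do rewrite !mxE.
transitivity (\sum_y F (e i) y * F (e j) y); first by rewrite (reindex e) //; exact: onW_bij.
by rewrite F_orth (bij_eq e_bij) -(bij_eq_card e_bij) card_ord mulr_natr.
Qed.

Lemma fun_mx_graphical :
  (forall x y, F x y = F y x) -> (forall x y, F x x = F y y) -> graphical fun_mx.
Proof.
move=> F_sym F_diag; split; first by apply/matrixP => i j; rewrite !mxE F_sym.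
by move=> i j; rewrite !mxE (F_diag (e i) (e j)).
Qed.

Lemma quad_count_fun_mx : quad_count fun_mx = quad_count F.
Proof.
rewrite (quad_count_ext (G := fun i j => F (e i) (e j))); last by move=> i j; rewrite mxE.
exact: quad_count_reindex.
Qed.

End FunMatrix.

Section Developed.
Variables (G : finZmodType) (h : G -> bool).

Definition dev_fun (x y : G) : int := (-1) ^+ h (x - y).

Definition perfect_autocorrelation : Prop :=
  forall g, \sum_t ((-1) ^+ (h t (+) h (t + g)) : int) = #|G|%:R * (g == 0)%:R.

Definition shift_xor (u v w t : G) : bool := h t (+) h (t + u) (+) h (t + v) (+) h (t + w).

Definition shift_const (u v w : G) : bool :=
  [forall t, shift_xor u v w t == shift_xor u v w 0].

Definition dev_quad_count : nat := (\sum_u \sum_v \sum_w shift_const u v w)%N.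

Lemma dev_fun_sign x y : dev_fun x y ^+ 2 = 1.
Proof. exact: sqrr_sign. Qed.

Lemma dev_fun_orth : perfect_autocorrelation ->
  forall x z, \sum_y dev_fun x y * dev_fun z y = #|G|%:R * (x == z)%:R.
Proof.
move=> h_auto x z; rewrite (reindex_inj (can_inj (subKr x))) /=.
under eq_bigr => t _ do rewrite /dev_fun subKr -signr_addb opprB addrCA.
by rewrite h_auto subr_eq0 eq_sym.
Qed.

Lemma dev_fun_sym : (forall g, h (- g) = h g) -> forall x y, dev_fun x y = dev_fun y x.
Proof. by move=> h_even x y; rewrite /dev_fun -opprB h_even. Qed.

Lemma dev_fun_diag x y : dev_fun x x = dev_fun y y.
Proof. by rewrite /dev_fun !subrr. Qed.

Lemma const_prod4_dev a b c d :
  const_prod4 dev_fun (a, b, c, d) = shift_const (b - a) (c - a) (d - a).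
Proof.
have row_X y :
    row_prod4 dev_fun (a, b, c, d) y = (-1) ^+ shift_xor (b - a) (c - a) (d - a) (a - y).
  by rewrite /shift_xor /row_prod4 /dev_fun /= !signr_addb !(addrC (a - y)) !subrKA.
apply/forallP/forallP => [Hq t | Hq y].
  by have := forallP (Hq (a - t)) a; rewrite !row_X (inj_eq signr_inj) subKr subrr.
apply/forallP => y'; rewrite !row_X (inj_eq signr_inj).
by rewrite (eqP (Hq (a - y))) (eqP (Hq (a - y'))).
Qed.

Lemma quad_count_dev : quad_count dev_fun = (#|G| * dev_quad_count)%N.
Proof.
transitivity (\sum_a \sum_b \sum_c \sum_d (const_prod4 dev_fun (a, b, c, d) : nat))%N.
  by rewrite !pair_bigA; apply: eq_bigr => -[[[a b] c] d].
rewrite -sum_nat_const; apply: eq_bigr => a _.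
have shift (f : G -> nat) : (\sum_b f (b - a)%R = \sum_u f u)%N.
  by rewrite (reindex_inj (addIr a)); apply: eq_bigr => u _; rewrite addrK.
under eq_bigr => b _ do under eq_bigr => c _ do under eq_bigr => d _ do rewrite const_prod4_dev.
rewrite (shift (fun u => \sum_c \sum_d shift_const u (c - a)%R (d - a)%R)%N).
apply: eq_bigr => u _; rewrite (shift (fun v => \sum_d shift_const u v (d - a)%R)%N).
by apply: eq_bigr => v _; rewrite (shift (shift_const u v)).
Qed.

End Developed.

Definition enum_cast (T : finType) (n : nat) (card_T : #|T| = n) (i : 'I_n) : T :=
  enum_val (cast_ord (esym card_T) i).

Lemma enum_cast_bij (T : finType) (n : nat) (card_T : #|T| = n) :
  bijective (enum_cast card_T).
Proof.
exists (fun x => cast_ord card_T (enum_rank x)) => [i | x]; rewrite /enum_cast.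
  by rewrite enum_valK cast_ordKV.
by rewrite cast_ordK enum_rankK.
Qed.

Lemma big_full_seq (R : Type) (idx : R) (op : Monoid.com_law idx) (T : finType)
    (s : seq T) (F : T -> R) :
  uniq s -> (forall x, x \in s) -> \big[op/idx]_x F x = foldr op idx [seq F x | x <- s].
Proof.
move=> s_uniq s_full; rewrite foldrE big_map [RHS]big_uniq //.
by apply: eq_bigl => x; rewrite s_full.
Qed.

Lemma forall_full_seq (T : finType) (s : seq T) (P : pred T) :
  (forall x, x \in s) -> [forall x, P x] = all P s.
Proof.
by move=> s_full; apply/forallP/allP => [P_all x _ | P_s x]; [exact: P_all | exact: P_s].
Qed.

(* Products carry no canonical finZmodType, so the alias is given one. *)
Definition Z4cube := ('Z_4 * 'Z_4 * 'Z_4)%type.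
HB.instance Definition _ := GRing.Zmodule.copy Z4cube ('Z_4 * 'Z_4 * 'Z_4)%type.
HB.instance Definition _ := Finite.copy Z4cube ('Z_4 * 'Z_4 * 'Z_4)%type.

Definition enum_Z4 : seq 'Z_4 := [seq i%:R | i <- iota 0 4].

Definition enum_Z4cube : seq Z4cube :=
  [seq (ab, c) | ab <- [seq (a, b) | a <- enum_Z4, b <- enum_Z4], c <- enum_Z4].

Lemma mem_enum_Z4cube x : x \in enum_Z4cube.
Proof.
have mem_Z4 (a : 'Z_4) : a \in enum_Z4.
  by rewrite -[a]natr_Zp map_f // mem_iota leq0n add0n; exact: ltn_ord.
by case: x => [[a b] c]; rewrite !allpairs_f.
Qed.

Lemma enum_Z4cube_uniq : uniq enum_Z4cube.
Proof. by vm_compute. Qed.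

Lemma card_Z4cube : #|{: Z4cube}| = 64%N.
Proof. by rewrite !card_prod card_ord. Qed.

Lemma big_Z4cube (R : Type) (idx : R) (op : Monoid.com_law idx) (F : Z4cube -> R) :
  \big[op/idx]_x F x = foldr op idx [seq F x | x <- enum_Z4cube].
Proof. exact: big_full_seq enum_Z4cube_uniq mem_enum_Z4cube. Qed.

Lemma all_Z4cube (P : pred Z4cube) : all P enum_Z4cube -> forall x, P x.
Proof. by move=> /allP P_all x; apply/P_all/mem_enum_Z4cube. Qed.

Lemma eqfun_Z4cube (T : eqType) (f g : Z4cube -> T) :
  all (fun x => f x == g x) enum_Z4cube -> f =1 g.
Proof. by move=> fg x; apply/eqP; move: x; apply: all_Z4cube. Qed.

Lemma perfect_autocorrelation_Z4cube (h : Z4cube -> bool) :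
    all (fun g => foldr +%R (0 : int) [seq (-1) ^+ (h t (+) h (t + g)) | t <- enum_Z4cube]
                  == 64%:R * (g == 0)%:R) enum_Z4cube ->
  perfect_autocorrelation h.
Proof.
by move=> h_ok g; rewrite card_Z4cube big_Z4cube; apply/eqP; move: g; apply: all_Z4cube.
Qed.

Lemma forall_eq_const (T : finType) (f : T -> bool) (t0 : T) :
  [forall t, f t == f t0] = [forall t, ~~ f t] || [forall t, f t].
Proof.
apply/idP/idP => [/forallP f_const | /orP[] /forallP f_const].
- case f_t0: (f t0); apply/orP; [right | left]; apply/forallP => t;
    by rewrite (eqP (f_const t)) f_t0.
- by apply/forallP => t; rewrite (negbTE (f_const t)) (negbTE (f_const t0)).
- by apply/forallP => t; rewrite !f_const.
Qed.

Definition xorseq (r s : seq bool) : seq bool := [seq p.1 (+) p.2 | p <- zip r s].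

Lemma xorseq_map (T : Type) (f g : T -> bool) (s : seq T) :
  xorseq (map f s) (map g s) = [seq f t (+) g t | t <- s].
Proof. by rewrite /xorseq zip_map -map_comp. Qed.

(* dev_quad_count in terms of the rows [h (t + a) | t] of the developed matrix; evaluating
   each row once is what makes the count feasible by computation. *)
Definition rows_quad_count (R : seq (seq bool)) (r0 : seq bool) : nat :=
  foldr addn 0 [seq foldr addn 0 [seq
    (let x := xorseq (xorseq r0 ru) rv in
     foldr addn 0 [seq nat_of_bool ((rw == x) || (rw == map negb x)) | rw <- R])
    | rv <- R] | ru <- R].

Definition Z4cube_row (h : Z4cube -> bool) (a : Z4cube) : seq bool :=
  [seq h (t + a) | t <- enum_Z4cube].

Lemma shift_const_rows (h : Z4cube -> bool) u v w :
  let x := xorseq (xorseq (Z4cube_row h 0) (Z4cube_row h u)) (Z4cube_row h v) in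
  shift_const h u v w = (Z4cube_row h w == x) || (Z4cube_row h w == map negb x).
Proof.
move=> x; rewrite {}/x /Z4cube_row !xorseq_map -map_comp /shift_const forall_eq_const.
rewrite !eq_map_all !all_map -!(forall_full_seq _ mem_enum_Z4cube) /=.
by congr orb; apply: eq_forallb => t; rewrite addr0 /shift_xor;
  move: (h (t + w)) (h t (+) h (t + u) (+) h (t + v)) => [] [].
Qed.

Lemma dev_quad_count_Z4cube (h : Z4cube -> bool) :
  dev_quad_count h = rows_quad_count [seq Z4cube_row h a | a <- enum_Z4cube] (Z4cube_row h 0).
Proof.
rewrite /dev_quad_count /rows_quad_count.
rewrite big_Z4cube -[in RHS]map_comp; congr foldr; apply: eq_map => u; rewrite /comp.
rewrite big_Z4cube -[in RHS]map_comp; congr foldr; apply: eq_map => v; rewrite /comp.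
rewrite big_Z4cube -[in RHS]map_comp; congr foldr; apply: eq_map => w; rewrite /comp.
by rewrite shift_const_rows.
Qed.

Definition Z4cube_array (l : seq nat) (t : Z4cube) : bool :=
  (nth 0 l (t.1.1 * 16 + t.1.2 * 4 + t.2) == 1)%N.

Definition pbaA : Z4cube -> bool := Z4cube_array
  [:: 1; 0; 0; 0; 0; 0; 1; 1; 1; 0; 0; 0; 0; 1; 1; 0;
     0; 0; 0; 0; 0; 0; 0; 1; 1; 0; 1; 0; 1; 1; 1; 0;
     0; 1; 1; 1; 0; 1; 1; 0; 0; 1; 1; 1; 0; 0; 1; 1;
     0; 0; 0; 0; 1; 0; 1; 1; 1; 0; 1; 0; 0; 1; 0; 0]%N.

Definition pbaB : Z4cube -> bool := Z4cube_array
  [:: 1; 1; 1; 1; 1; 0; 1; 0; 0; 0; 0; 0; 1; 0; 1; 0;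
     0; 0; 1; 1; 1; 1; 0; 0; 0; 0; 1; 1; 0; 0; 1; 1;
     0; 1; 0; 1; 1; 1; 1; 1; 1; 0; 1; 0; 1; 1; 1; 1;
     0; 1; 1; 0; 0; 1; 1; 0; 0; 1; 1; 0; 1; 0; 0; 1]%N.

Lemma pbaA_autocorrelation : perfect_autocorrelation pbaA.
Proof. by apply: perfect_autocorrelation_Z4cube; vm_compute. Qed.

Lemma pbaB_autocorrelation : perfect_autocorrelation pbaB.
Proof. by apply: perfect_autocorrelation_Z4cube; vm_compute. Qed.

Lemma pbaA_even : forall g, pbaA (- g) = pbaA g.
Proof. by apply: (@eqfun_Z4cube _ (fun g => pbaA (- g))); vm_compute. Qed.

Lemma pbaB_even : forall g, pbaB (- g) = pbaB g.
Proof. by apply: (@eqfun_Z4cube _ (fun g => pbaB (- g))); vm_compute. Qed.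

Lemma dev_quad_count_pbaA : dev_quad_count pbaA = 832%N.
Proof. by rewrite dev_quad_count_Z4cube; vm_compute. Qed.

Lemma dev_quad_count_pbaB : dev_quad_count pbaB = 4096%N.
Proof. by rewrite dev_quad_count_Z4cube; vm_compute. Qed.

Lemma card_ffun_Z4cube (N : nat) : #|{: {ffun 'I_N -> Z4cube}}| = (4 ^ (3 * N))%N.
Proof. by rewrite card_ffun card_Z4cube card_ord expnM. Qed.

Definition mixed_pba (k i : nat) : Z4cube -> bool := if (i < k)%N then pbaA else pbaB.

Definition mixed_mx (N k : nat) : 'M[int]_(4 ^ (3 * N)) :=
  fun_mx (enum_cast (card_ffun_Z4cube N))
         (tensor_fun (fun i : 'I_N => dev_fun (mixed_pba k i))).

Lemma mixed_pba_autocorrelation k i : perfect_autocorrelation (mixed_pba k i).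
Proof.
by rewrite /mixed_pba; case: ifP => _; [exact: pbaA_autocorrelation | exact: pbaB_autocorrelation].
Qed.

Lemma mixed_pba_even k i g : mixed_pba k i (- g) = mixed_pba k i g.
Proof. by rewrite /mixed_pba; case: ifP => _; [exact: pbaA_even | exact: pbaB_even]. Qed.

Lemma mixed_mx_hadamard N k : hadamard (mixed_mx N k).
Proof.
apply: fun_mx_hadamard; first exact: enum_cast_bij.
  by move=> x y; apply: tensor_fun_sign => i; apply: dev_fun_sign.
by apply: tensor_fun_orth => i; apply/dev_fun_orth/mixed_pba_autocorrelation.
Qed.

Lemma mixed_mx_graphical N k : graphical (mixed_mx N k).
Proof.
apply: fun_mx_graphical.
  by apply: tensor_fun_sym => i; apply/dev_fun_sym/mixed_pba_even.
by apply: tensor_fun_diag => i; apply: dev_fun_diag.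
Qed.

Lemma quad_count_mixed_mx N k : (k <= N)%N ->
  quad_count (mixed_mx N k) = ((64 * 832) ^ k * (64 * 4096) ^ (N - k))%N.
Proof.
move=> le_kN; rewrite quad_count_fun_mx; last exact: enum_cast_bij.
rewrite quad_count_tensor; last by move=> i; apply: dev_fun_sign.
rewrite -(big_mkord xpredT (fun i => quad_count (dev_fun (mixed_pba k i)))).
rewrite (big_cat_nat (leq0n k) le_kN) /=.
rewrite (eq_big_nat _ _ (F2 := fun=> (64 * 832)%N)) => [|i /andP[_ lt_ik]]; last first.
  by rewrite /mixed_pba lt_ik quad_count_dev dev_quad_count_pbaA card_Z4cube.
rewrite [X in (_ * X)%N](eq_big_nat _ _ (F2 := fun=> (64 * 4096)%N)); last first.
  move=> i /andP[le_ki _].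
  by rewrite /mixed_pba ltnNge le_ki quad_count_dev dev_quad_count_pbaB card_Z4cube.
by rewrite !prod_nat_const_nat subn0.
Qed.

Lemma logn_quad_count_mixed_mx N k : (k <= N)%N -> logn 13 (quad_count (mixed_mx N k)) = k.
Proof.
(* 64 * 832 = 13 * 2^12 and 64 * 4096 = 2^18. *)
move=> le_kN; rewrite quad_count_mixed_mx // lognM ?expn_gt0 // !lognX.
have -> : logn 13 (64 * 832) = 1%N by vm_compute.
have -> : logn 13 (64 * 4096) = 0%N by vm_compute.
by rewrite muln1 muln0 addn0.
Qed.

Theorem corollary7p2 :
  forall N : nat, (0 < N)%N ->
  exists m : nat, (0 < m)%N /\
    exists Hs : seq 'M[int]_(4 ^ m),
      size Hs = N /\
      (forall H, H \in Hs -> hadamard H /\ graphical H) /\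
      (forall i j, (i < N)%N -> (j < N)%N -> i <> j ->
         ~ hadamard_equiv (nth 0 Hs i) (nth 0 Hs j)).
Proof.
move=> N N_gt0; exists (3 * N)%N; split; first by rewrite muln_gt0.
exists [seq mixed_mx N k | k <- iota 0 N]; split; first by rewrite size_map size_iota.
split=> [H /mapP[k _ ->] | i j lt_iN lt_jN neq_ij].
  by split; [exact: mixed_mx_hadamard | exact: mixed_mx_graphical].
rewrite !(nth_map 0%N) ?size_iota // !nth_iota // !add0n => /quad_count_equiv eq_count.
apply: neq_ij; rewrite -(logn_quad_count_mixed_mx (ltnW lt_iN)) -eq_count.
by rewrite logn_quad_count_mixed_mx // ltnW.
Qed.
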